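(* Let $k=2r$ with $r\ge1$, $G=BS(1,k)$, and $m>0$. Let $\mathcal{A}_m$ be the set of words $a^{x_0}ta^{x_1}t\cdots a^{x_{m-1}}t$ ($x_i\in\mathbb{Z}$) satisfying: (1) $|x_i|\le r$ for all $i$; (2) for each $i$, if $x_{i-1}=r$ then $0\le x_i<r$, and if $x_{i-1}=-r$ then $-r<x_i\le0$ (with the convention $x_{-1}=x_{m-1}$); (3) if $m$ is even, the words $(a^{-(r-1)}ta^{-r}t)^{m/2}$ and $(a^{-r}ta^{-(r-1)}t)^{m/2}$ are excluded. Then two words in $\mathcal{A}_m$ represent conjugate elements of $G$ if and only if they are cyclic permutations of each other, and every word in $\mathcal{A}_m$ is a conjugacy geodesic.
   Context: $BS(1,k)=\langle a,t\mid tat^{-1}=a^k\rangle$. $a^x$ denotes $|x|$ copies of $a$ or $a^{-1}$ according to the sign of $x$. Word length is with respect to $\{a,t\}$. A word is a conjugacy geodesic if it is a geodesic word and the element it represents has minimal length among all elements of its conjugacy class. *)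

From mathcomp Require Import all_boot all_order all_algebra.
Set Implicit Arguments. Unset Strict Implicit. Unset Printing Implicit Defensive.
Import Order.TTheory GRing.Theory Num.Theory.

Inductive letter := LA | LAi | LT | LTi.

Definition linv (x : letter) : letter :=
  match x with LA => LAi | LAi => LA | LT => LTi | LTi => LT end.

Definition word := seq letter.

Definition winv (w : word) : word := rev (map linv w).

(* Equality of elements of BS(1,k) represented by words: the congruence on
   words generated by free cancellation x x^-1 = 1 and the relator t a t^-1 = a^k. *)
Inductive bs_eq (k : nat) : word -> word -> Prop :=
| bs_refl w : bs_eq k w w
| bs_sym u v : bs_eq k u v -> bs_eq k v u
| bs_trans u v w : bs_eq k u v -> bs_eq k v w -> bs_eq k u w
| bs_ctx p s u v : bs_eq k u v -> bs_eq k (p ++ u ++ s) (p ++ v ++ s)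
| bs_free x : bs_eq k [:: x; linv x] [::]
| bs_rel : bs_eq k [:: LT; LA; LTi] (nseq k LA).

Definition geodesic (k : nat) (w : word) : Prop :=
  forall v, bs_eq k w v -> size w <= size v.

Definition conj_words (k : nat) (w v : word) : Prop :=
  exists u, bs_eq k (u ++ w ++ winv u) v.

Definition conj_geodesic (k : nat) (w : word) : Prop :=
  geodesic k w /\ forall v, conj_words k w v -> size w <= size v.

Definition cyc_perm (w v : word) : Prop := exists n, v = rot n w.

Definition apow (x : int) : word :=
  if (0 <= x)%R then nseq `|x|%N LA else nseq `|x|%N LAi.

Definition wordof (xs : seq int) : word := flatten [seq apow x ++ [:: LT] | x <- xs].

Definition Am_exps (r m : nat) (xs : seq int) : Prop :=
  [/\ size xs = m,
      (forall i, i < m -> (`|(nth 0%R xs i)| <= (Posz r))%R),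
      (forall i, i < m ->
         let p := nth 0%R xs ((i + m - 1) %% m) in
         (p = (Posz r) -> (0 <= (nth 0%R xs i) < (Posz r))%R) /\
         (p = (- (Posz r))%R -> (- (Posz r) < (nth 0%R xs i) <= 0)%R)) &
      (~~ odd m ->
         xs <> mkseq (fun i => if odd i then (- (Posz r))%R else (- ((Posz r) - 1))%R) m /\
         xs <> mkseq (fun i => if odd i then (- ((Posz r) - 1))%R else (- (Posz r))%R) m)].

Definition Am (r m : nat) (w : word) : Prop :=
  exists xs, Am_exps r m xs /\ w = wordof xs.

From mathcomp Require Import all_boot all_order all_algebra.
From mathcomp Require Import zify ring.
Set Implicit Arguments. Unset Strict Implicit. Unset Printing Implicit Defensive.
Import Order.TTheory GRing.Theory Num.Theory.
Local Open Scope ring_scope.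

(* View BS(1,2r) as Z[1/2r] >< Z.  Conjugating an element of t-exponent m by
   powers of a changes its Z[1/2r]-part by multiples of (2r)^m - 1, and
   conjugating by t multiplies it by a power of 2r; so its residue modulo
   (2r)^m - 1, read as a cyclic base-2r expansion up to rotation, is a
   conjugacy invariant.
   The exponent sequences of A_m are the "balanced" cyclic expansions.  Two
   expansions x, d of the same residue are linked by cyclic carries,
   2r c_(i+1) = c_i + d_i - x_i, and:
   - a potential built from the carries and x telescopes to 0 around the cycle
     and grows by at most |d_i| - |x_i| at position i, so a balanced expansion
     has minimal digit sum; a word of t-exponent m has at least m letters t and
     at least (digit sum) letters a, whence the geodesic claims;
   - between two balanced expansions the carries lie in {-1,0,1}, and a carry
     +-1 propagates around the whole cycle and forces one of the excluded
     alternating words; so balanced expansions of a residue are unique, which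
     gives the conjugacy criterion. *)

Lemma linvK : involutive linv.
Proof. by case. Qed.

Lemma winv_cons x u : winv (x :: u) = winv u ++ [:: linv x].
Proof. by rewrite /winv /= rev_cons cats1. Qed.

Lemma winvK : involutive winv.
Proof. by move=> u; rewrite /winv map_rev revK -map_comp (eq_map linvK) map_id. Qed.

Lemma bs_eq_cat_winv k u : bs_eq k (u ++ winv u) [::].
Proof.
elim: u => [|x u IH] /=; first exact: bs_refl.
rewrite winv_cons; apply: bs_trans (bs_free k x).
by have := bs_ctx [:: x] [:: linv x] IH; rewrite /= -catA.
Qed.

Lemma cyc_perm_conj_words k w1 w2 : cyc_perm w1 w2 -> conj_words k w1 w2.
Proof.
case=> n ->; rewrite /rot -{1}(cat_take_drop n w1).
set p := take n w1; set s := drop n w1; exists (winv p); rewrite winvK.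
have := bs_ctx [::] (s ++ p) (bs_eq_cat_winv k (winv p)).
by rewrite winvK /= !catA.
Qed.

(** * Invariants of words *)

Fixpoint texp (w : word) : int :=
  match w with
  | [::] => 0
  | LT :: w' => 1 + texp w'
  | LTi :: w' => -1 + texp w'
  | _ :: w' => texp w'
  end.

Fixpoint acount (w : word) : nat :=
  match w with
  | [::] => 0
  | LA :: w' | LAi :: w' => (acount w').+1
  | _ :: w' => acount w'
  end.

(* Congruent to the t-exponent of w modulo m; t^-1 counts as m - 1 so that the
   level stays in nat. *)
Fixpoint tlevel (m : nat) (w : word) : nat :=
  match w with
  | [::] => 0
  | LT :: w' => (tlevel m w').+1
  | LTi :: w' => (m.-1 + tlevel m w')%N
  | _ :: w' => tlevel m w'
  end.

(* In BS(1,K) = Z[1/K] >< Z, an a-letter read at t-level h contributes K^h;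
   modulo K^m - 1 the level only matters modulo m. *)
Fixpoint avalue (K : int) (m h : nat) (w : word) : int :=
  match w with
  | [::] => 0
  | LA :: w' => K ^+ (h %% m) + avalue K m h w'
  | LAi :: w' => - K ^+ (h %% m) + avalue K m h w'
  | LT :: w' => avalue K m h.+1 w'
  | LTi :: w' => avalue K m (h + m.-1) w'
  end.

Fixpoint adigit (m h : nat) (w : word) (i : nat) : int :=
  match w with
  | [::] => 0
  | LA :: w' => ((h %% m)%N == i : nat)%:Z + adigit m h w' i
  | LAi :: w' => - ((h %% m)%N == i : nat)%:Z + adigit m h w' i
  | LT :: w' => adigit m h.+1 w' i
  | LTi :: w' => adigit m (h + m.-1) w' i
  end.

Lemma texp_cat p s : texp (p ++ s) = texp p + texp s.
Proof. by elim: p => [|[] p IH] /=; rewrite ?IH; lia. Qed.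

Lemma tlevel_cat m p s : tlevel m (p ++ s) = (tlevel m p + tlevel m s)%N.
Proof. by elim: p => [|[] p IH] /=; rewrite ?IH; lia. Qed.

Lemma avalue_mod K m h w : avalue K m h w = avalue K m (h %% m) w.
Proof.
elim: w h => [|[] w IH] h //=; rewrite ?modn_mod ?(IH h) //.
- by rewrite (IH h.+1) (IH (h %% m).+1) -[(h %% m).+1]addn1 modnDml addn1.
- by rewrite (IH (h + _)%N) (IH (h %% m + _)%N) modnDml.
Qed.

Lemma avalue_cat K m h p s :
  avalue K m h (p ++ s) = avalue K m h p + avalue K m (h + tlevel m p) s.
Proof.
elim: p h => [|[] p IH] h /=; rewrite ?addn0 ?add0r // IH ?addrA //.
- by rewrite addSnnS.
- by rewrite addnA.
Qed.

Lemma avalue_nseqA K m h n : avalue K m h (nseq n LA) = n%:Z * K ^+ (h %% m).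
Proof. by elim: n => [|n IH] /=; rewrite ?mul0r // IH; lia. Qed.

Lemma avalue_nseqAi K m h n : avalue K m h (nseq n LAi) = - (n%:Z * K ^+ (h %% m)).
Proof. by elim: n => [|n IH] /=; rewrite ?mul0r ?oppr0 // IH; lia. Qed.

Lemma expr_modn (K : int) m a : (0 < m)%N ->
  (K ^+ a = K ^+ (a %% m) %[mod K ^+ m - 1])%Z.
Proof.
move=> m_gt0; have Km : (K ^+ m = 1 %[mod K ^+ m - 1])%Z.
  by have := modzDl 1 (K ^+ m - 1); rewrite subrK.
rewrite {1}(divn_eq a m) exprD mulnC exprM -modzMml -modzXm Km.
by rewrite modzXm expr1n modzMml mul1r.
Qed.

Lemma bs_eq_invariant (k m : nat) u v : (0 < m)%N -> bs_eq k u v ->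
  [/\ forall h, (avalue k m h u = avalue k m h v %[mod k%:Z ^+ m - 1])%Z,
      (tlevel m u = tlevel m v %[mod m])%N & texp u = texp v].
Proof.
move=> m_gt0; elim=> {u v}.
- by [].
- by move=> u v _ [eU eL eT]; split=> // h; rewrite eU.
- by move=> u v w _ [eU eL eT] _ [eU' eL' eT']; split=> [h||]; rewrite ?eU ?eL ?eT.
- move=> p s u v _ [eU eL eT]; split=> [h||]; last by rewrite !texp_cat eT.
  + set h' := (h + tlevel m p)%N.
    have es : avalue k m (h' + tlevel m u) s = avalue k m (h' + tlevel m v) s.
      by rewrite avalue_mod [RHS]avalue_mod -modnDmr eL modnDmr.
    rewrite !avalue_cat -/h' es addrCA [in RHS]addrCA.
    by rewrite -modzDml eU modzDml.
  + by rewrite !tlevel_cat addnCA [in RHS]addnCA -modnDml eL modnDml.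
- move=> x; split=> [h||]; case: x => //=.
  + by rewrite addrA subrr.
  + by rewrite addrA addNr.
  + by rewrite addn0 prednK // modnn mod0n.
  + by rewrite addn1 prednK // modnn mod0n.
- split=> [h||] /=.
  + rewrite avalue_nseqA addr0 -exprS [RHS]expr_modn //.
    by rewrite -[(h %% m).+1]addn1 modnDml addn1.
  + have -> : tlevel m (nseq k LA) = 0%N by elim: k.
    by rewrite addn0 prednK // modnn mod0n.
  + by elim: k.
Qed.

Lemma avalue_conj (k : nat) m h u w : (0 < m)%N -> (tlevel m w %% m = 0)%N ->
  (avalue k m h (u ++ w ++ winv u) = avalue k m (h + tlevel m u) w %[mod k%:Z ^+ m - 1])%Z.
Proof.
move=> m_gt0 w0; have [uV _ _] := bs_eq_invariant m_gt0 (bs_eq_cat_winv k u).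
have := uV h; rewrite avalue_cat /= => {}uV.
rewrite !avalue_cat (avalue_mod _ _ (_ + tlevel m w)) -modnDmr w0 addn0 -avalue_mod.
by rewrite addrCA -modzDmr uV mod0z addr0.
Qed.

Lemma acount_texp_le_size w : (acount w)%:Z + texp w <= (size w)%:Z.
Proof. by elim: w => [|[] w IH] /=; lia. Qed.

Lemma sum_indicator m j (F : nat -> int) : (j < m)%N ->
  \sum_(i < m) (j == i : nat)%:Z * F i = F j.
Proof.
move=> lt_jm; rewrite (bigD1 (Ordinal lt_jm)) //= eqxx mul1r big1 ?addr0 // => i.
by rewrite -val_eqE eq_sym /= => /negbTE ->; rewrite mul0r.
Qed.

Lemma ler_sum_indicator m j (F G : 'I_m -> int) : (j < m)%N ->
  (forall i, `|F i| <= (j == i : nat)%:Z + `|G i|) ->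
  \sum_(i < m) `|F i| <= 1 + \sum_(i < m) `|G i|.
Proof.
move=> lt_jm le_FG.
apply: le_trans (_ : \sum_(i < m) ((j == i : nat)%:Z + `|G i|) <= _).
  by apply: ler_sum => i _; apply: le_FG.
rewrite big_split /= lerD2r -[X in _ <= X](sum_indicator (fun=> 1) lt_jm).
by apply: ler_sum => i _; rewrite mulr1.
Qed.

Lemma avalue_adigit K m h w : (0 < m)%N ->
  avalue K m h w = \sum_(i < m) adigit m h w i * K ^+ i.
Proof.
move=> m_gt0; elim: w h => [|[] w IH] h /=; rewrite ?IH //.
- by rewrite big1 // => i _; rewrite mul0r.
- rewrite -[K ^+ _](sum_indicator (fun i => K ^+ i) (ltn_pmod h m_gt0)) -big_split.
  by apply: eq_bigr => i _; rewrite mulrDl.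
- rewrite -[K ^+ _](sum_indicator (fun i => K ^+ i) (ltn_pmod h m_gt0)) -sumrN.
  by rewrite -big_split; apply: eq_bigr => i _; rewrite mulrDl mulNr.
Qed.

Lemma sum_norm_adigit_le m h w : (0 < m)%N ->
  \sum_(i < m) `|adigit m h w i| <= (acount w)%:Z.
Proof.
move=> m_gt0; elim: w h => [|[] w IH] h //=.
- by rewrite big1 // => i _; rewrite normr0.
- apply: le_trans (_ : _ <= 1 + \sum_(i < m) `|adigit m h w i|) _.
    apply: ler_sum_indicator (ltn_pmod h m_gt0) _ => i.
    by apply: le_trans (ler_normD _ _) _; rewrite ger0_norm.
  by rewrite -addn1 PoszD addrC lerD2r IH.
- apply: le_trans (_ : _ <= 1 + \sum_(i < m) `|adigit m h w i|) _.
    apply: ler_sum_indicator (ltn_pmod h m_gt0) _ => i.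
    by apply: le_trans (ler_normD _ _) _; rewrite normrN ger0_norm.
  by rewrite -addn1 PoszD addrC lerD2r IH.
Qed.

Lemma wordof_cons x xs : wordof (x :: xs) = apow x ++ LT :: wordof xs.
Proof. by rewrite /wordof /= -catA. Qed.

Lemma wordof_cat xs ys : wordof (xs ++ ys) = wordof xs ++ wordof ys.
Proof. by rewrite /wordof map_cat flatten_cat. Qed.

Lemma wordof_rot n xs : wordof (rot n xs) = rot (size (wordof (take n xs))) (wordof xs).
Proof.
have -> : wordof xs = wordof (take n xs) ++ wordof (drop n xs).
  by rewrite -wordof_cat cat_take_drop.
by rewrite {1}/rot wordof_cat rot_size_cat.
Qed.

Lemma apow_nseq x : apow x = nseq `|x| (if (0 <= x)%R then LA else LAi).
Proof. by rewrite /apow; case: ifP. Qed.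

Lemma avalue_apow K m h x : avalue K m h (apow x) = x * K ^+ (h %% m).
Proof.
rewrite /apow; case: ifP => [x_ge0|/negbT]; first by rewrite avalue_nseqA gez0_abs.
by rewrite -ltNge => x_lt0; rewrite avalue_nseqAi ltz0_abs // mulNr opprK.
Qed.

Lemma texp_apow x : texp (apow x) = 0.
Proof. by rewrite apow_nseq; case: ifP => _; elim: `|x|%N. Qed.

Lemma tlevel_apow m x : tlevel m (apow x) = 0%N.
Proof. by rewrite apow_nseq; case: ifP => _; elim: `|x|%N. Qed.

Lemma size_wordof xs :
  (size (wordof xs))%:Z = (size xs)%:Z + \sum_(i < size xs) `|xs`_i|.
Proof.
elim: xs => [|x xs IH]; first by rewrite big_ord0.
rewrite wordof_cons size_cat /= big_ord_recl /= apow_nseq size_nseq.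
rewrite (eq_bigr (fun i : 'I_ _ => `|xs`_i|)) //.
by move: IH; rewrite -!abszE; set S := \sum_(i < _) _; lia.
Qed.

Lemma texp_wordof xs : texp (wordof xs) = (size xs)%:Z.
Proof. by elim: xs => [|x xs IH] //; rewrite wordof_cons texp_cat texp_apow /= IH; lia. Qed.

Lemma tlevel_wordof m xs : tlevel m (wordof xs) = size xs.
Proof. by elim: xs => [|x xs IH] //; rewrite wordof_cons tlevel_cat tlevel_apow /= IH. Qed.

Lemma avalue_wordof K m h xs :
  avalue K m h (wordof xs) = \sum_(i < size xs) xs`_i * K ^+ ((h + i) %% m).
Proof.
elim: xs h => [|x xs IH] h; first by rewrite big_ord0.
rewrite wordof_cons avalue_cat avalue_apow tlevel_apow addn0 /= IH big_ord_recl addn0.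
by congr (_ + _); apply: eq_bigr => i _; rewrite addSnnS.
Qed.

(** * Cyclic expansions and their carries *)

Definition periodic m (f : nat -> int) := forall i, f i = f (i %% m)%N.

Lemma periodicD m f i : periodic m f -> f (i + m)%N = f i.
Proof. by move=> f_per; rewrite f_per modnDr -f_per. Qed.

Lemma periodicMD m f n i : periodic m f -> f (i + n * m)%N = f i.
Proof. by move=> f_per; rewrite f_per addnC modnMDl -f_per. Qed.

Lemma sum_shift_periodic m (F : nat -> int) n : (forall i, F (i + m)%N = F i) ->
  \sum_(i < m) F (i + n)%N = \sum_(i < m) F i.
Proof.
move=> F_per; elim: n => [|n IH]; first by apply: eq_bigr => i _; rewrite addn0.
rewrite -IH; apply/eqP; rewrite -subr_eq0 -sumrB.
rewrite -(big_mkord xpredT (fun i => F (i + n.+1)%N - F (i + n)%N)).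
rewrite (eq_bigr (fun i => F (i.+1 + n)%N - F (i + n)%N)) => [|i _]; last by rewrite addnS.
by rewrite telescope_sumr // add0n addnC F_per subrr.
Qed.

(* Conditions (1) and (2) of A_m, read forwards along a cyclic sequence. *)
Definition balanced r (f : nat -> int) :=
  [/\ forall i, `|f i| <= r%:Z,
      forall i, f i = r%:Z -> 0 <= f i.+1 < r%:Z &
      forall i, f i = - r%:Z -> - r%:Z < f i.+1 <= 0].

(* The cyclic form of the two words excluded by condition (3) of A_m. *)
Definition alternating r (f : nat -> int) :=
  forall i, (f i = - r%:Z \/ f i = 1 - r%:Z) /\ f i + f i.+1 = 1 - 2 * r%:Z.

Lemma periodic_shift m n f : periodic m f -> periodic m (fun i => f (i + n)%N).
Proof. by move=> f_per i; rewrite f_per [in RHS]f_per modnDml. Qed.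

Lemma balanced_shift r n f : balanced r f -> balanced r (fun i => f (i + n)%N).
Proof. by case=> f_le f_R f_NR; split=> [i|i|i]; [apply: f_le | apply: f_R | apply: f_NR]. Qed.

Lemma not_alternating_shift r m n f : (0 < m)%N -> periodic m f ->
  ~ alternating r f -> ~ alternating r (fun i => f (i + n)%N).
Proof.
move=> m_gt0 f_per f_alt sf_alt; apply: f_alt => i; have := sf_alt (i + n * m.-1)%N => /=.
have e : (i + n * m.-1 + n = i + n * m)%N by rewrite -addnA -mulnSr prednK.
by rewrite e addSn e -addSn !periodicMD.
Qed.

(* [back_carry K q m d n] is the carry c_(m-n) computed downwards from c_m = q
   through c_i = K c_(i+1) - d_i. *)
Fixpoint back_carry (K q : int) (m : nat) (d : nat -> int) (n : nat) : int :=
  if n is n'.+1 then K * back_carry K q m d n' - d (m - n)%N else q.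

Lemma back_carry_sum (K q : int) m (d : nat -> int) n : (n <= m)%N ->
  \sum_(0 <= i < m) d i * K ^+ i = q * (K ^+ m - 1) ->
  \sum_(0 <= i < m - n) d i * K ^+ i = K ^+ (m - n) * back_carry K q m d n - q.
Proof.
move=> + sum_d; elim: n => [|n IH] le_nm /=; first by rewrite subn0 sum_d; ring.
have e : (m - n = (m - n.+1).+1)%N by lia.
move: (IH (ltnW le_nm)); rewrite e big_nat_recr //= exprS => {}IH.
have -> : \sum_(0 <= i < m - n.+1) d i * K ^+ i =
          K * K ^+ (m - n.+1) * back_carry K q m d n - q - d (m - n.+1)%N * K ^+ (m - n.+1).
  by rewrite -IH; ring.
ring.
Qed.

Lemma cyclic_carries (K q : int) m (d : nat -> int) : (0 < m)%N ->
  \sum_(i < m) d i * K ^+ i = q * (K ^+ m - 1) ->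
  exists c : nat -> int,
    [/\ c 0%N = q, periodic m c & forall i, (i < m)%N -> K * c i.+1 = c i + d i].
Proof.
move=> m_gt0 sum_d'.
have sum_d : \sum_(0 <= i < m) d i * K ^+ i = q * (K ^+ m - 1) by rewrite big_mkord.
have cm : back_carry K q m d m = q.
  have := back_carry_sum (leqnn m) sum_d; rewrite subnn big_geq // expr0 mul1r.
  by move/eqP; rewrite eq_sym subr_eq0 => /eqP.
exists (fun i => back_carry K q m d (m - i %% m)); split=> [|i|i lt_im] /=.
- by rewrite mod0n subn0.
- by rewrite modn_mod.
- rewrite (modn_small lt_im); have [lt_i1m|] := ltnP i.+1 m.
  + rewrite (modn_small lt_i1m) (_ : (m - i = (m - i.+1).+1)%N) /=; last by lia.
    by rewrite (_ : (m - (m - i.+1).+1 = i)%N) //; [ring | lia].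
  + move=> le_mi1; have e1 : i.+1 = m by lia.
    rewrite e1 modnn subn0 cm (_ : (m - i = 1)%N) /=; last by lia.
    by rewrite subn1 -e1 /=; ring.
Qed.

Definition carry_potential (R c z : int) : int :=
  `|c| - ((c == 1) && (z == - R) : nat)%:Z - ((c == -1) && (z == R) : nat)%:Z.

Lemma carry_potential_step (R zp z ci co : int) : 1 <= R -> `|zp| <= R -> `|z| <= R ->
  (zp = R -> 0 <= z < R) -> (zp = - R -> - R < z <= 0) ->
  carry_potential R co z - carry_potential R ci zp <= `|z + 2 * R * co - ci| - `|z|.
Proof.
move=> R_ge1 zp_le z_le zp_R zp_NR; rewrite /carry_potential.
rewrite (_ : 2 * R * co = 2 * (R * co)); last by ring.
have [co_ge2|[co_leN2|co_le1]] : 2 <= co \/ co <= -2 \/ -1 <= co <= 1 by lia.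
- have : 2 * R <= R * co by nia.
  have : co + R - 1 <= R * co by nia.
  by move: (R * co) => P; lia.
- have : R * co <= - 2 * R by nia.
  have : R * co <= co - R + 1 by nia.
  by move: (R * co) => P; lia.
- have [->|[->|->]] : co = -1 \/ co = 0 \/ co = 1 by lia.
  all: by rewrite ?mulr0 ?mulrN1 ?mulr1; lia.
Qed.

Section BalancedExpansion.

Variables (r m : nat).
Hypotheses (r_gt0 : (0 < r)%N) (m_gt0 : (0 < m)%N).
Local Notation R := r%:Z.
Local Notation K := (2 * r)%:Z.

Let K_eq : K = 2 * R. Proof. exact: PoszM. Qed.

Lemma balanced_norm_min (z d : nat -> int) : periodic m z -> balanced r z ->
  (\sum_(i < m) d i * K ^+ i = \sum_(i < m) z i * K ^+ i %[mod K ^+ m - 1])%Z ->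
  \sum_(i < m) `|z i| <= \sum_(i < m) `|d i|.
Proof.
move=> z_per [z_le z_R z_NR] /eqP; rewrite eqz_mod_dvd => /dvdzP[q sum_dz].
have sum_dz' : \sum_(i < m) (d i - z i) * K ^+ i = q * (K ^+ m - 1).
  by rewrite -sum_dz -sumrB; apply: eq_bigr => i _; rewrite mulrBl.
have [c [_ c_per c_rel]] := cyclic_carries (d := fun i => d i - z i) m_gt0 sum_dz'.
pose g i := carry_potential R (c i) (z (i + m.-1)%N).
have z_prev i : z (i.+1 + m.-1)%N = z i by rewrite addSnnS prednK // periodicD.
have g_step (i : 'I_m) : g i.+1 - g i <= `|d i| - `|z i|.
  rewrite /g z_prev.
  have -> : d i = z i + 2 * R * c i.+1 - c i.
    by have := c_rel i (ltn_ord i); rewrite K_eq; lia.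
  apply: carry_potential_step; rewrite ?z_le //.
  - by move/z_R; rewrite -addnS prednK // periodicD.
  - by move/z_NR; rewrite -addnS prednK // periodicD.
have g_sum : \sum_(i < m) (g i.+1 - g i) = 0.
  rewrite -(big_mkord xpredT (fun i => g i.+1 - g i)) telescope_sumr //.
  by rewrite /g (c_per m) modnn add0n addnC periodicD // subrr.
by rewrite -subr_ge0 -sumrB -[X in X <= _]g_sum; apply: ler_sum => i _; apply: g_step.
Qed.

Lemma balanced_value_lt (x : nat -> int) : periodic m x -> balanced r x ->
  (2 * R - 1) * `|\sum_(i < m) x i * K ^+ i| < R * (K ^+ m - 1).
Proof.
move=> x_per [x_le x_R x_NR].
have [j lt_jm x_lt] : exists2 j, (j < m)%N & `|x j| < R.
  have [x0_lt|x0_ge] := ltP `|x 0%N| R; first by exists 0%N.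
  have x1_lt : `|x 1%N| < R.
    have [x0|x0] : x 0%N = R \/ x 0%N = - R by have := x_le 0%N; lia.
    - by have := x_R _ x0; lia.
    - by have := x_NR _ x0; lia.
  have [lt_1m|] := ltnP 1 m; first by exists 1%N.
  by move=> le_m1; move: x1_lt; rewrite x_per (_ : m = 1%N) ?modnn; lia.
have K_gt0 : 0 < K by rewrite K_eq; lia.
have sum_lt : \sum_(i < m) `|x i| * K ^+ i < R * \sum_(i < m) K ^+ i.
  rewrite mulr_sumr -subr_gt0 -sumrB (bigD1 (Ordinal lt_jm)) //= -mulrBl.
  have : 0 < (R - `|x j|) * K ^+ j by rewrite mulr_gt0 ?subr_gt0 ?exprn_gt0.
  have : 0 <= \sum_(i < m | i != Ordinal lt_jm) (R * K ^+ i - `|x i| * K ^+ i).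
    by apply: sumr_ge0 => i _; rewrite -mulrBl mulr_ge0 ?subr_ge0 ?x_le ?exprn_ge0 ?ltW.
  by move: (\sum_(i < m | _) _) ((R - _) * _) => A B; lia.
have norm_le : `|\sum_(i < m) x i * K ^+ i| <= \sum_(i < m) `|x i| * K ^+ i.
  apply: le_trans (ler_norm_sum _ _ _) _; apply: ler_sum => i _.
  by rewrite normrM normrX (gtr0_norm K_gt0).
rewrite subrX1 K_eq mulrCA ltr_pM2l; last lia.
by apply: le_lt_trans norm_le _; rewrite -K_eq.
Qed.

Lemma balanced_quotient_le1 (x y : nat -> int) q :
  periodic m x -> periodic m y -> balanced r x -> balanced r y ->
  \sum_(i < m) x i * K ^+ i - \sum_(i < m) y i * K ^+ i = q * (K ^+ m - 1) ->
  `|q| <= 1.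
Proof.
move=> x_per y_per x_bal y_bal.
have := balanced_value_lt x_per x_bal; have := balanced_value_lt y_per y_bal.
set X := \sum_(i < m) x i * K ^+ i; set Y := \sum_(i < m) y i * K ^+ i.
set N := K ^+ m - 1 => Y_lt X_lt XY.
have N_gt0 : 0 < N.
  by rewrite subr_gt0 -(expr1n _ m) ltrXn2r -?lt0n // K_eq; lia.
have qN : `|q| * N = `|X - Y| by rewrite XY normrM (gtr0_norm N_gt0).
have XY_le : `|X - Y| <= `|X| + `|Y| by apply: ler_normB.
rewrite leNgt; apply/negP => q_gt1.
have : (2 * R - 1) * 2 * N <= (2 * R - 1) * `|q| * N.
  by rewrite ler_pM2r // ler_pM2l //; lia.
by move: X_lt Y_lt N_gt0 XY_le; rewrite -qN; nia.
Qed.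

Lemma carries_le1 (x y c : nat -> int) : balanced r x -> balanced r y ->
  `|c 0%N| <= 1 -> (forall i, K * c i.+1 = c i + x i - y i) ->
  forall i, `|c i| <= 1.
Proof.
move=> [x_le _ _] [y_le _ _] c0_le c_rel; elim=> [//|i IH].
have := c_rel i; have := x_le i; have := y_le i; rewrite K_eq.
have [//|c_ge2] : `|c i.+1| <= 1 \/ 2 <= `|c i.+1| by lia.
nia.
Qed.

Lemma carry_neq1 (x y c : nat -> int) :
  balanced r x -> balanced r y -> ~ alternating r y -> periodic m c ->
  (forall i, `|c i| <= 1) -> (forall i, K * c i.+1 = c i + x i - y i) ->
  forall i, c i <> 1.
Proof.
move=> [x_le x_R x_NR] [y_le y_R y_NR] y_alt c_per c_le c_rel.
have c_pred i : c i.+1 = 1 -> c i = 1.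
  move=> ci1; have := c_rel i; rewrite ci1 K_eq => rel_i.
  have := x_le i; have := y_le i; have := c_le i => c_i x_i y_i.
  have : c i = 0 \/ c i = 1 \/ c i = -1 by lia.
  case=> [ci0|[//|ciN]]; last by lia.
  have [xi yi] : x i = R /\ y i = - R by lia.
  have := x_R _ xi; have := y_NR _ yi => y_i1 x_i1.
  have := c_rel i.+1; rewrite ci1 K_eq => rel_i1; have := c_le i.+2 => c_i2.
  have : c i.+2 = -1 \/ c i.+2 = 0 \/ c i.+2 = 1 by lia.
  by case=> [e|[e|e]]; rewrite e in rel_i1; lia.
have c_down n i : c (i + n)%N = 1 -> c i = 1.
  by elim: n i => [|n IH] i; rewrite ?addn0 // addnS => /c_pred /IH.
move=> j cj1; have c1 i : c i = 1.
  apply: (c_down (j %% m + i * m - i)%N); rewrite subnKC.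
    by rewrite c_per addnC modnMDl modn_mod -c_per.
  by apply: leq_trans (leq_addl _ _); rewrite leq_pmulr.
apply: y_alt => i; have := c_rel i; have := c_rel i.+1; rewrite !c1 K_eq => rel_i1 rel_i.
have := x_le i; have := y_le i; have := x_le i.+1; have := y_le i.+1 => y_i1 x_i1 y_i x_i.
have [yi|yi] : y i = - R \/ y i = 1 - R by lia.
- by have := y_NR _ yi; split; lia.
- by have := x_R i; split; lia.
Qed.

Lemma balanced_unique (x y : nat -> int) :
  periodic m x -> periodic m y -> balanced r x -> balanced r y ->
  ~ alternating r x -> ~ alternating r y ->
  (\sum_(i < m) x i * K ^+ i = \sum_(i < m) y i * K ^+ i %[mod K ^+ m - 1])%Z ->
  forall i, x i = y i.
Proof.
move=> x_per y_per x_bal y_bal x_alt y_alt /eqP; rewrite eqz_mod_dvd => /dvdzP[q sum_xy].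
have q_le1 := balanced_quotient_le1 x_per y_per x_bal y_bal sum_xy.
have sum_xy' : \sum_(i < m) (x i - y i) * K ^+ i = q * (K ^+ m - 1).
  by rewrite -sum_xy -sumrB; apply: eq_bigr => i _; rewrite mulrBl.
have [c [c0 c_per c_rel']] := cyclic_carries (d := fun i => x i - y i) m_gt0 sum_xy'.
have c_rel i : K * c i.+1 = c i + x i - y i.
  have := c_rel' _ (ltn_pmod i m_gt0); rewrite /= addrA -x_per -y_per -c_per => <-.
  by rewrite c_per [in RHS]c_per -[(i %% m).+1]addn1 modnDml addn1.
have c_le : forall i, `|c i| <= 1 by apply: carries_le1 x_bal y_bal _ c_rel; rewrite c0.
have c_neq1 := carry_neq1 x_bal y_bal y_alt c_per c_le c_rel.
have c_neqN1 : forall i, - c i <> 1.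
  apply: carry_neq1 y_bal x_bal x_alt _ _ _ => [i|i|i] /=.
  - by rewrite -c_per.
  - by rewrite normrN.
  - by rewrite mulrN c_rel; ring.
have c_eq0 i : c i = 0 by have := c_le i; have := c_neq1 i; have := c_neqN1 i; lia.
by move=> i; have := c_rel i; rewrite !c_eq0; lia.
Qed.

End BalancedExpansion.

(** * The exponent sequences of A_m *)

Definition cyc_nth m (xs : seq int) (i : nat) : int := nth 0 xs (i %% m).

Lemma periodic_cyc_nth m xs : periodic m (cyc_nth m xs).
Proof. by move=> i; rewrite /cyc_nth modn_mod. Qed.

Lemma sum_norm_cyc_nth m xs : size xs = m ->
  \sum_(i < m) `|cyc_nth m xs i| = \sum_(i < size xs) `|xs`_i|.
Proof. by move=> <-; apply: eq_bigr => i _; rewrite /cyc_nth (modn_small (ltn_ord i)). Qed.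

Lemma nth_rot_mod (T : Type) (x0 : T) (s : seq T) n i :
  (n <= size s)%N -> (i < size s)%N -> nth x0 (rot n s) i = nth x0 s ((i + n) %% size s).
Proof.
move=> le_ns lt_is; rewrite /rot nth_cat size_drop.
case: ltnP => i_lt.
- by rewrite nth_drop modn_small 1?addnC //; lia.
- rewrite nth_take; last lia.
  have -> : (i + n = i - (size s - n) + size s)%N by lia.
  by rewrite modnDr modn_small //; lia.
Qed.

Lemma avalue_wordof_shift K m h n xs : size xs = m -> ((h + n) %% m = 0)%N ->
  avalue K m h (wordof xs) = \sum_(i < m) cyc_nth m xs (i + n) * K ^+ i.
Proof.
move=> xs_size hn0; pose F i := cyc_nth m xs i * K ^+ ((h + i) %% m).
rewrite avalue_wordof xs_size (eq_bigr (fun i : 'I_m => F i)) => [|i _]; last first.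
  by rewrite /F /cyc_nth (modn_small (ltn_ord i)).
rewrite -(sum_shift_periodic (F := F) n) => [|i]; last by rewrite /F /cyc_nth addnA !modnDr.
apply: eq_bigr => i _.
by rewrite /F addnCA -modnDmr hn0 addn0 (modn_small (ltn_ord i)).
Qed.

Section ExponentSequences.

Variables (r m : nat) (xs : seq int).
Hypotheses (m_gt0 : (0 < m)%N) (xs_Am : Am_exps r m xs).

Lemma Am_exps_balanced : balanced r (cyc_nth m xs).
Proof.
have [_ xs_le xs_prev _] := xs_Am.
have prev i : ((i.+1 %% m + m - 1) %% m = i %% m)%N.
  by rewrite -addnBA // subn1 modnDml addSnnS prednK // modnDr.
split=> i; first by apply: xs_le; rewrite ltn_pmod.
- by have [+ _] := xs_prev _ (ltn_pmod i.+1 m_gt0); rewrite prev.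
- by have [_ +] := xs_prev _ (ltn_pmod i.+1 m_gt0); rewrite prev.
Qed.

Lemma Am_exps_not_alternating : ~ alternating r (cyc_nth m xs).
Proof.
have [xs_size _ _ xs_excl] := xs_Am; set f := cyc_nth m xs => f_alt.
have f_odd i : f i = if odd i then 1 - 2 * r%:Z - f 0%N else f 0%N.
  elim: i => [|i IH] //=; have [_] := f_alt i; rewrite IH.
  by case: (odd i) => /=; lia.
have [f0 _] := f_alt 0%N.
have m_even : ~~ odd m.
  have fm : f m = f 0%N by rewrite /f /cyc_nth modnn mod0n.
  by apply/negP => m_odd; have := f_odd m; rewrite m_odd fm; lia.
have xs_eq : xs = mkseq (fun i => if odd i then 1 - 2 * r%:Z - f 0%N else f 0%N) m.
  apply: (@eq_from_nth _ 0); rewrite ?size_mkseq // => i; rewrite xs_size => lt_im.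
  by rewrite nth_mkseq // -f_odd /f /cyc_nth modn_small.
have [xs_ne1 xs_ne2] := xs_excl m_even.
by case: f0 => f0; [apply: xs_ne2 | apply: xs_ne1]; rewrite xs_eq;
  apply: eq_mkseq => i; rewrite f0; case: odd; lia.
Qed.

Lemma Am_exps_shift n :
  let f i := cyc_nth m xs (i + n) in
  [/\ periodic m f, balanced r f & ~ alternating r f].
Proof.
split; first exact: periodic_shift (periodic_cyc_nth m xs).
  exact: balanced_shift Am_exps_balanced.
exact: not_alternating_shift m_gt0 (periodic_cyc_nth m xs) Am_exps_not_alternating.
Qed.

End ExponentSequences.

Lemma conj_wordof_avalue (k m : nat) xs v : (0 < m)%N -> size xs = m ->
  conj_words k (wordof xs) v ->
  exists2 n, (n < m)%N &
    (avalue k m 0 v = \sum_(i < m) cyc_nth m xs (i + n) * k%:Z ^+ i %[mod k%:Z ^+ m - 1])%Z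
    /\ texp v = m%:Z.
Proof.
move=> m_gt0 xs_size [u uxu_v]; have [uxu _ uxu_texp] := bs_eq_invariant m_gt0 uxu_v.
set h := tlevel m u; exists ((m - h %% m) %% m)%N; first by rewrite ltn_pmod.
split; last first.
  have [_ _ uV] := bs_eq_invariant m_gt0 (bs_eq_cat_winv k u).
  by rewrite -uxu_texp !texp_cat addrCA -texp_cat uV texp_wordof xs_size addr0.
rewrite -uxu avalue_conj ?tlevel_wordof ?xs_size ?modnn // add0n.
rewrite (avalue_wordof_shift (n := (m - h %% m) %% m) _ xs_size) //.
by rewrite modnDmr -modnDml subnKC ?modnn // ltnW // ltn_pmod.
Qed.

Lemma Am_conj_size_le r m w v : (0 < r)%N -> (0 < m)%N ->
  Am r m w -> conj_words (2 * r) w v -> (size w <= size v)%N.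
Proof.
move=> r_gt0 m_gt0 [xs [xs_Am ->]] wv; have [xs_size _ _ _] := xs_Am.
have [n _ [xv v_texp]] := conj_wordof_avalue m_gt0 xs_size wv.
rewrite (avalue_adigit _ _ _ m_gt0) in xv.
have [x_per x_bal _] := Am_exps_shift m_gt0 xs_Am n.
have := balanced_norm_min r_gt0 m_gt0 x_per x_bal xv.
rewrite (sum_shift_periodic (F := fun i => `|cyc_nth m xs i|)); last first.
  by move=> i; rewrite /cyc_nth modnDr.
have := sum_norm_adigit_le 0 v m_gt0; have := acount_texp_le_size v.
have := size_wordof xs; rewrite v_texp -(sum_norm_cyc_nth xs_size) xs_size.
by move: (\sum_(i < m) _) (\sum_(i < m) _) => A B; lia.
Qed.

Lemma Am_conj_cyc_perm r m w1 w2 : (0 < r)%N -> (0 < m)%N ->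
  Am r m w1 -> Am r m w2 -> conj_words (2 * r) w1 w2 -> cyc_perm w1 w2.
Proof.
move=> r_gt0 m_gt0 [xs [xs_Am ->]] [ys [ys_Am ->]] xy.
have [xs_size _ _ _] := xs_Am; have [ys_size _ _ _] := ys_Am.
have [n lt_nm [xy_val _]] := conj_wordof_avalue m_gt0 xs_size xy.
rewrite (avalue_wordof_shift (n := 0) _ ys_size) ?mod0n // in xy_val.
have [x_per x_bal x_alt] := Am_exps_shift m_gt0 xs_Am n.
have [y_per y_bal y_alt] := Am_exps_shift m_gt0 ys_Am 0.
have yx := balanced_unique r_gt0 m_gt0 y_per x_per y_bal x_bal y_alt x_alt xy_val.
exists (size (wordof (take n xs))); rewrite -wordof_rot; congr wordof.
apply: (@eq_from_nth _ 0); first by rewrite size_rot xs_size ys_size.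
move=> i; rewrite ys_size => lt_im; rewrite nth_rot_mod ?xs_size ?(ltnW lt_nm) //.
by have := yx i; rewrite /cyc_nth addn0 (modn_small lt_im) => ->.
Qed.

Local Close Scope ring_scope.

Theorem lemma4p5 (r m : nat) (hr : 1 <= r) (hm : 0 < m) :
  (forall w1 w2 : word, Am r m w1 -> Am r m w2 ->
     (conj_words (2 * r) w1 w2 <-> cyc_perm w1 w2)) /\
  (forall w : word, Am r m w -> conj_geodesic (2 * r) w).
Proof.
split=> [w1 w2 w1_Am w2_Am | w w_Am].
  by split; [apply: Am_conj_cyc_perm hr hm w1_Am w2_Am | apply: cyc_perm_conj_words].
split=> v wv; apply: (Am_conj_size_le hr hm w_Am) => //.
by exists [::]; rewrite /winv /= cats0.
Qed.
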